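(* Let $G$ be a group, $E$ a real Banach space, and $f\colon G\to E$ such that $\|f(xy)+f(xy^{-1})-2f(x)\|\le c$ for all $x,y\in G$, where $c>0$. Define $c_1=c+2\|f(1)\|$, $c_2=c+\|f(1)\|$, $c_3=c+c_1$, and $c_m=c+c_1+c_{m-2}$ for $m>3$. Then for every integer $m>1$, every $k\in\mathbb{N}$ and every $x\in G$, $\|f(x^{m^k})-m^kf(x)\|\le c_m(1+m+\cdots+m^{k-1})$ and $\left\|\frac{1}{m^k}f(x^{m^k})-f(x)\right\|\le c_m$. *)

From HB Require Import structures.
From mathcomp Require Import all_boot all_order all_algebra.
From mathcomp Require Import boolp classical_sets reals topology normedtype.
Set Implicit Arguments. Unset Strict Implicit. Unset Printing Implicit Defensive.
Import Order.TTheory GRing.Theory Num.Theory.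
Local Open Scope ring_scope.

(* The constants c_m of the paper, given c, c1 = c + 2||f(1)|| and
   c2 = c + ||f(1)||:  c_1 = c1, c_2 = c2, c_3 = c + c1,
   c_m = c + c1 + c_(m-2) for m > 3.  (c_0 is unused; set to 0.) *)
Fixpoint cseq_aux (R : realType) (c c1 c2 : R) (m : nat) : R :=
  match m with
  | 0 => 0
  | 1 => c1
  | 2 => c2
  | 3 => c + c1
  | p.+2 => c + c1 + cseq_aux c c1 c2 p
  end.

Definition cconst (R : realType) (c a : R) (m : nat) : R :=
  cseq_aux c (c + 2 * a) (c + a) m.

(* Write d_m(x) := |f(x^m) - m f(x)|.  The two instances of the hypothesis at
   (x, x^(m-1)) and at (1, x^(m-2)) share the term f(x^(2-m)); eliminating it
   gives d_m <= c + c_1 + d_(m-2), and d_2 <= c_2 comes from (x, x).  Hence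
   d_m <= c_m for every m >= 1.  Iterating x |-> x^m and using
   1 + m + ... + m^(k-1) <= m^k gives both estimates. *)
From HB Require Import structures.
From mathcomp Require Import all_boot all_order all_algebra.
From mathcomp Require Import boolp classical_sets reals topology normedtype.
Set Implicit Arguments. Unset Strict Implicit. Unset Printing Implicit Defensive.
Import Order.TTheory GRing.Theory Num.Theory.
Local Open Scope ring_scope.

Lemma sum_expn_le (m k : nat) : (1 < m)%N -> (\sum_(i < k) m ^ i <= m ^ k)%N.
Proof.
move=> m_gt1; apply: leq_trans (leq_pred _).
by rewrite predn_exp leq_pmull // -subn1 subn_gt0.
Qed.

Lemma cconst_ge0 (R : realType) (c a : R) (m : nat) :
  0 <= c -> 0 <= a -> 0 <= cconst c a m.
Proof.
move=> c_ge0 a_ge0; rewrite /cconst.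
elim/ltn_ind: m => -[|[|[|[|p]]]] IH //=; rewrite ?addr_ge0 ?mulr_ge0 //.
exact: (IH p.+2).
Qed.

Section IteratedPowers.
Variables (R : numFieldType) (G : groupType) (V : normedModType R) (f : G -> V).
Variables (m : nat) (C : R).
Hypothesis defect_m : forall y : G, `|f (y ^+ m)%g - m%:R *: f y| <= C.

Lemma defect_expn (k : nat) (y : G) :
  `|f (y ^+ (m ^ k))%g - (m ^ k)%:R *: f y| <= C * \sum_(i < k) (m ^ i)%:R.
Proof.
elim: k => [|k IH]; first by rewrite expg1 scale1r subrr normr0 big_ord0 mulr0.
have split_defect : f (y ^+ (m ^ k.+1))%g - (m ^ k.+1)%:R *: f y =
    (f ((y ^+ (m ^ k)) ^+ m)%g - m%:R *: f (y ^+ (m ^ k))%g)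
    + m%:R *: (f (y ^+ (m ^ k))%g - (m ^ k)%:R *: f y).
  by rewrite expnSr expgnA scalerBr scalerA -natrM mulnC addrA subrK.
rewrite split_defect big_ord_recl expn0 mulrDr mulr1.
apply: le_trans (ler_normD _ _) _; apply: lerD; first exact: defect_m.
under eq_bigr do rewrite expnS natrM.
by rewrite -mulr_sumr mulrCA normrZ ger0_norm // ler_wpM2l.
Qed.

Hypothesis m_gt1 : (1 < m)%N.
Hypothesis C_ge0 : 0 <= C.

Lemma scaled_defect_expn (k : nat) (y : G) :
  `|(m ^ k)%:R^-1 *: f (y ^+ (m ^ k))%g - f y| <= C.
Proof.
have mk_gt0 : 0 < (m ^ k)%:R :> R by rewrite ltr0n expn_gt0 ltnW.
rewrite -[f y](scalerK (lt0r_neq0 mk_gt0)) -scalerBr normrZ ger0_norm; last first.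
  by rewrite invr_ge0 ltW.
rewrite mulrC ler_pdivrMr //; apply: le_trans (defect_expn k y) _.
by rewrite ler_wpM2l // -natr_sum ler_nat sum_expn_le.
Qed.

End IteratedPowers.

Section PowerDefect.
Variables (R : realType) (G : groupType) (E : normedModType R) (f : G -> E).
Variable c : R.
Hypothesis c_ge0 : 0 <= c.
Hypothesis hf : forall x y : G, `|f (x * y)%g + f (x * y^-1)%g - 2 *: f x| <= c.

Let a := `|f 1%g|.

Lemma defect_exp2 (x : G) : `|f (x ^+ 2)%g - 2%:R *: f x| <= c + a.
Proof.
have := hf x x; rewrite mulgV -expg2 => h.
have -> : f (x ^+ 2)%g - 2%:R *: f x = (f (x ^+ 2)%g + f 1%g - 2 *: f x) - f 1%g.
  by rewrite addrAC addrK.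
by apply: le_trans (ler_normB _ _) _; apply: lerD.
Qed.

Lemma defect_expSS (n : nat) (x : G) :
  `|f (x ^+ n.+3)%g - n.+3%:R *: f x|
    <= c + (c + 2 * a) + `|f (x ^+ n.+1)%g - n.+1%:R *: f x|.
Proof.
set u := f (x ^+ n.+3)%g; set v := f (x ^- n.+1)%g; set w := f (x ^+ n.+1)%g.
have h1 : `|u + v - 2 *: f x| <= c.
  have := hf x (x ^+ n.+2)%g.
  by rewrite -expgS [(x ^+ n.+2)%g]expgSr invgM mulgA mulgV mul1g.
have h2 : `|w + v - 2 *: f 1%g| <= c by have := hf 1%g (x ^+ n.+1)%g; rewrite !mul1g.
have -> : u - n.+3%:R *: f x =
    (u + v - 2 *: f x) - (w + v - 2 *: f 1%g) - 2 *: f 1%g + (w - n.+1%:R *: f x).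
  rewrite -addn2 natrD scalerDl !opprD !opprK !addrA addrK (addrAC _ (- v) w).
  by rewrite subrK (addrAC _ (- (2 *: f x))) addrK addrAC.
apply: le_trans (ler_normD _ _) _; rewrite lerD2r addrA.
apply: le_trans (ler_normB _ _) _; apply: lerD.
  by apply: le_trans (ler_normB _ _) _; apply: lerD.
by rewrite normrZ ger0_norm.
Qed.

Lemma defect_exp (m : nat) :
  (0 < m)%N -> forall x : G, `|f (x ^+ m)%g - m%:R *: f x| <= cconst c a m.
Proof.
have a_ge0 : 0 <= a by exact: normr_ge0.
elim/ltn_ind: m => -[|[|[|[|p]]]] IH // _ x.
- by rewrite expg1 scale1r subrr normr0 cconst_ge0.
- exact: defect_exp2.
- by apply: le_trans (defect_expSS 0 x) _; rewrite expg1 scale1r subrr normr0 addr0.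
- by apply: le_trans (defect_expSS p.+1 x) _; rewrite lerD2l IH.
Qed.

End PowerDefect.

Theorem lemma2p4 (R : realType) (G : groupType) (E : completeNormedModType R)
  (f : G -> E) (c : R) (hc : 0 < c)
  (hf : forall x y : G,
      `|f (x * y)%g + f (x * y^-1)%g - 2 *: f x| <= c)
  (m k : nat) (hm : (1 < m)%N) (x : G) :
  `|f (x ^+ (m ^ k))%g - (m ^ k)%:R *: f x|
      <= cconst c `|f 1%g| m * \sum_(i < k) (m ^ i)%:R
  /\ `|(m ^ k)%:R^-1 *: f (x ^+ (m ^ k))%g - f x| <= cconst c `|f 1%g| m.
Proof.
have c_ge0 := ltW hc.
have defect_m := defect_exp c_ge0 hf (ltnW hm).
split; first exact: (defect_expn defect_m).
by apply: (scaled_defect_expn defect_m hm); rewrite cconst_ge0.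
Qed.
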